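(* Let $\mathbb{F}_2=\langle a\rangle\ast\langle b\rangle$ and let $f=f_A\ast f_B$ be a split quasimorphism with bounded factors $f_A,f_B$. Then $f$ is at bounded distance from the (pointwise convergent) sum \[ \sum_{k=1}^\infty f_A(a^k)C_{a,k}+f_B(b^k)C_{b,k}, \] which is a quasimorphism; in particular $\widehat f=\sum_{k=1}^\infty f_A(a^k)\widehat{C}_{a,k}+f_B(b^k)\widehat{C}_{b,k}$. Furthermore, if $f_A$ and $f_B$ have finite support, then $f$ is at bounded distance from a finite linear combination of counting quasimorphisms.
   Context: $f_A:\langle a\rangle\to\mathbb{R}$, $f_B:\langle b\rangle\to\mathbb{R}$ are bounded and alternating ($f(x^{-1})=-f(x)$); each non-trivial element of $\mathbb{F}_2$ has a unique normal form $a^{k_1}b^{l_1}\cdots a^{k_m}b^{l_m}$ with all exponents non-zero except possibly $k_1$ or $l_m$, and $f(1)=0$, $f(a^{k_1}b^{l_1}\cdots)=f_A(a^{k_1})+f_B(b^{l_1})+\dots+f_A(a^{k_m})+f_B(b^{l_m})$. For $w,g\in\mathbb{F}_2$, $h_w(g)$ is the number of occurrences (overlaps allowed) of the reduced word $w$ as a subword of the reduced word $g$ over $a^{\pm1},b^{\pm1}$ ($h_w(g)=0$ if $w$ or $g$ is trivial), and the counting quasimorphism is $C_w=h_w-h_{w^{-1}}$. For $k\geq1$: $C_{a,k}=C_{ba^kb}+C_{ba^kb^{-1}}+C_{b^{-1}a^kb}+C_{b^{-1}a^kb^{-1}}$ and $C_{b,k}=C_{ab^ka}+C_{ab^ka^{-1}}+C_{a^{-1}b^ka}+C_{a^{-1}b^ka^{-1}}$.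 Hats denote homogenization $\widehat F(g)=\lim_{n\to\infty}F(g^n)/n$. *)

(* free group F_2 = <a> * <b> modelled by freely reduced words. *)
From Stdlib Require Import Reals ZArith List Bool.
Open Scope R_scope.

(** Generators and letters: a letter is a generator with a flag [true] = inverse. *)
Inductive gen := Ga | Gb.
Definition letter := (gen * bool)%type.

Definition gen_eqb (x y : gen) : bool :=
  match x, y with Ga, Ga | Gb, Gb => true | _, _ => false end.
Definition letter_eqb (x y : letter) : bool :=
  gen_eqb (fst x) (fst y) && Bool.eqb (snd x) (snd y).
Definition letter_inv (x : letter) : letter := (fst x, negb (snd x)).

Definition word := list letter.

Fixpoint reduced (w : word) : Prop :=
  match w with
  | nil => True
  | x :: w' =>
      match w' with
      | nil => True
      | y :: _ => letter_eqb y (letter_inv x) = false /\ reduced w'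
      end
  end.

Definition push (x : letter) (w : word) : word :=
  match w with
  | y :: w' => if letter_eqb y (letter_inv x) then w' else x :: w
  | nil => x :: nil
  end.
Definition reduce (w : word) : word := fold_right push nil w.

Definition mul (g h : word) : word := reduce (g ++ h).
Definition winv (g : word) : word := rev (map letter_inv g).
Definition pow (g : word) (n : nat) : word := reduce (concat (repeat g n)).

Definition gpow (x : gen) (k : nat) : word := repeat (x, false) k.

(** Subword counting: h_w(g) = number of (possibly overlapping) occurrences of
    w as a subword of g; 0 if w or g is trivial. *)
Fixpoint prefixb (w g : word) : bool :=
  match w, g with
  | nil, _ => true
  | x :: w', y :: g' => letter_eqb x y && prefixb w' g'
  | _ :: _, nil => false
  end.
Fixpoint occ (w g : word) : nat :=
  match g with
  | nil => 0
  | _ :: g' => (if prefixb w g then 1 else 0) + occ w g'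
  end.
Definition hcount (w g : word) : nat :=
  match w with nil => 0%nat | _ => occ w g end.

Definition Ccount (w : word) (g : word) : R :=
  INR (hcount w g) - INR (hcount (winv w) g).

Definition ainv : word := (Ga, true) :: nil.
Definition binv : word := (Gb, true) :: nil.
Definition aw : word := (Ga, false) :: nil.
Definition bw : word := (Gb, false) :: nil.

Definition Ca (k : nat) (g : word) : R :=
  Ccount (bw ++ gpow Ga k ++ bw) g + Ccount (bw ++ gpow Ga k ++ binv) g
  + Ccount (binv ++ gpow Ga k ++ bw) g + Ccount (binv ++ gpow Ga k ++ binv) g.
Definition Cb (k : nat) (g : word) : R :=
  Ccount (aw ++ gpow Gb k ++ aw) g + Ccount (aw ++ gpow Gb k ++ ainv) g
  + Ccount (ainv ++ gpow Gb k ++ aw) g + Ccount (ainv ++ gpow Gb k ++ ainv) g.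

(** Syllable decomposition of a (reduced) word: maximal runs of one generator,
    giving the normal form a^{k1} b^{l1} ... as a list of (generator, exponent). *)
Definition letter_exp (x : letter) : Z := if snd x then (-1)%Z else 1%Z.
Fixpoint syllables (w : word) : list (gen * Z) :=
  match w with
  | nil => nil
  | x :: w' =>
      match syllables w' with
      | (g', k) :: rest =>
          if gen_eqb (fst x) g' then (g', (letter_exp x + k)%Z) :: rest
          else (fst x, letter_exp x) :: (g', k) :: rest
      | nil => (fst x, letter_exp x) :: nil
      end
  end.

(** Split quasimorphism f = f_A * f_B, with f_A(a^k) = fA k, f_B(b^k) = fB k. *)
Definition split_qm (fA fB : Z -> R) (g : word) : R :=
  fold_right (fun s acc =>
    (match fst s with Ga => fA (snd s) | Gb => fB (snd s) end) + acc)
    0 (syllables g).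

Definition bounded_alternating (f : Z -> R) : Prop :=
  (exists M : R, forall k : Z, Rabs (f k) <= M) /\
  (forall k : Z, f (- k)%Z = - f k).

Definition finitely_supported (f : Z -> R) : Prop :=
  exists N : Z, forall k : Z, (N < Z.abs k)%Z -> f k = 0.

Definition is_quasimorphism (F : word -> R) : Prop :=
  exists D : R, forall g h : word, reduced g -> reduced h ->
    Rabs (F (mul g h) - F g - F h) <= D.

Definition bounded_distance (F G : word -> R) : Prop :=
  exists D : R, forall g : word, reduced g -> Rabs (F g - G g) <= D.

Definition homog (F : word -> R) (g : word) (l : R) : Prop :=
  Un_cv (fun n => F (pow g (S n)) / INR (S n)) l.

Definition series_term (fA fB : Z -> R) (k : nat) (g : word) : R :=
  fA (Z.of_nat k) * Ca k g + fB (Z.of_nat k) * Cb k g.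

Definition lin_comb (L : list (word * R)) (g : word) : R :=
  fold_right (fun p acc => snd p * Ccount (fst p) g + acc) 0 L.

From Pilot Require Import Defs.
From Stdlib Require Import Reals ZArith List Lia Lra Bool.
Open Scope R_scope.

(* Write [I(g)] for the sum of [f] over the syllables of [g] other than the first and the
   last one; then [|f - I| <= 2 sup |f|].  Prepending a letter to [g] creates a new occurrence
   of a sandwiched power [y^(+/-1) x^(+/-k) y^(+/-1)] exactly when it pushes the former first
   syllable [x^(+/-k)] of [g] into the interior.  Hence the k-th term of the series detects
   that syllable, and by induction on [g] the partial sums of the series equal [I(g)] as soon
   as they run past the length of [g]: the series converges pointwise to [I], which is a
   finite combination when [f_A] and [f_B] have finite support.  [f] is a quasimorphism
   because writing [g = u v], [h = v^-1 w], [gh = u w] it changes by at most three syllable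
   values under each concatenation, so [I] is one too.  Finally, cutting [f] at [|k| <= K],
   the interior sum of the remainder is at most [sup |f| |g^n| / (K + 1)] on [g^n], which
   after homogenisation bounds the tail of the homogenised series by
   [sup |f| |g| / (K + 1)]. *)

(** * Free reduction *)

Lemma gen_eqb_eq x y : gen_eqb x y = true -> x = y.
Proof. destruct x, y; simpl; congruence. Qed.

Lemma gen_eqb_refl x : gen_eqb x x = true.
Proof. destruct x; reflexivity. Qed.

Lemma letter_eqb_eq x y : letter_eqb x y = true -> x = y.
Proof. destruct x as [[] []], y as [[] []]; simpl; congruence || discriminate. Qed.

Lemma letter_inv_involutive x : letter_inv (letter_inv x) = x.
Proof. destruct x as [a s]; unfold letter_inv; simpl; rewrite negb_involutive; auto. Qed.

Lemma reduced_tl x g : reduced (x :: g) -> reduced g.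
Proof. destruct g; simpl; tauto. Qed.

Lemma push_reduced x w : reduced w -> reduced (push x w).
Proof.
  destruct w as [|y w]; simpl; [tauto|]. intros H.
  destruct (letter_eqb y (letter_inv x)) eqn:E.
  - destruct w; simpl in *; tauto.
  - simpl; tauto.
Qed.

Lemma reduce_reduced w : reduced (reduce w).
Proof. induction w; simpl; [exact I|]. apply push_reduced; auto. Qed.

Lemma reduce_id w : reduced w -> reduce w = w.
Proof.
  induction w as [|x w IH]; simpl; auto. intro H.
  rewrite IH by (eapply reduced_tl; eauto).
  destruct w as [|y w]; simpl; auto.
  destruct H as [H1 _]. rewrite H1. auto.
Qed.

Lemma push_inv_cancel x t : reduced t -> push x (push (letter_inv x) t) = t.
Proof.
  intro H. destruct t as [|y t]; simpl.
  - destruct x as [[] []]; reflexivity.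
  - rewrite letter_inv_involutive. destruct (letter_eqb y x) eqn:E.
    + apply letter_eqb_eq in E; subst y. destruct t as [|z t]; simpl; auto.
      destruct H as [H _]. rewrite H. auto.
    + simpl. destruct x as [[] []]; reflexivity.
Qed.

Definition push_all (p s : word) : word := fold_right push s p.

Lemma push_all_reduced p s : reduced s -> reduced (push_all p s).
Proof. induction p; simpl; auto. intro; apply push_reduced; auto. Qed.

Lemma reduce_app_push_all p q : reduce (p ++ q) = push_all p (reduce q).
Proof. unfold reduce, push_all. apply fold_right_app. Qed.

Lemma push_all_reduce p s : reduced s -> push_all p s = push_all (reduce p) s.
Proof.
  intro Hs. induction p as [|x p IH]; simpl; auto.
  rewrite IH. change (reduce (x :: p)) with (push x (reduce p)).
  destruct (reduce p) as [|y r]; simpl; auto.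
  destruct (letter_eqb y (letter_inv x)) eqn:E; simpl; auto.
  apply letter_eqb_eq in E; subst y.
  apply push_inv_cancel, push_all_reduced; auto.
Qed.

Lemma reduce_app p q : reduce (p ++ q) = mul (reduce p) (reduce q).
Proof.
  unfold mul. rewrite !reduce_app_push_all, (reduce_id (reduce q)) by apply reduce_reduced.
  apply push_all_reduce, reduce_reduced.
Qed.

Lemma mul_reduced g h : reduced (mul g h).
Proof. apply reduce_reduced. Qed.

Lemma pow_reduced g n : reduced (Defs.pow g n).
Proof. apply reduce_reduced. Qed.

Lemma word_pow_add g m n : Defs.pow g (m + n) = mul (Defs.pow g m) (Defs.pow g n).
Proof. unfold Defs.pow. rewrite repeat_app, concat_app. apply reduce_app. Qed.

Lemma reduce_length w : (length (reduce w) <= length w)%nat.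
Proof.
  induction w as [|x w IH]; simpl; auto.
  destruct (reduce w) as [|y r]; simpl in *; [lia|].
  destruct (letter_eqb _ _); simpl; lia.
Qed.

Lemma pow_length g n : (length (Defs.pow g n) <= n * length g)%nat.
Proof.
  unfold Defs.pow. eapply Nat.le_trans; [apply reduce_length|].
  induction n; simpl; auto. rewrite length_app. lia.
Qed.

Lemma winv_cons x v : winv (x :: v) = winv v ++ letter_inv x :: nil.
Proof. reflexivity. Qed.

Lemma winv_involutive w : winv (winv w) = w.
Proof.
  unfold winv. rewrite map_rev, rev_involutive, map_map.
  induction w as [|x w IH]; simpl; auto. rewrite letter_inv_involutive, IH. auto.
Qed.

Lemma mul_cancel_decomp g h : reduced g -> reduced h ->
  exists u v w, g = u ++ v /\ h = winv v ++ w /\ mul g h = u ++ w.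
Proof.
  intros Hg Hh. unfold mul. rewrite reduce_app_push_all, (reduce_id h Hh).
  induction g as [|x g IH].
  - exists nil, nil, h. auto.
  - destruct IH as [u [v [w [E1 [E2 E3]]]]]; [eapply reduced_tl; eauto|].
    simpl. rewrite E3. destruct u as [|y u].
    + simpl in E1. subst g. destruct w as [|z w].
      * exists (x :: nil), v, nil. auto.
      * simpl. destruct (letter_eqb z (letter_inv x)) eqn:E.
        -- apply letter_eqb_eq in E. subst z. exists nil, (x :: v), w.
           rewrite winv_cons, <- app_assoc. auto.
        -- exists (x :: nil), v, (z :: w). auto.
    + simpl. rewrite E1 in Hg. destruct Hg as [Hg _]. rewrite Hg.
      exists (x :: y :: u), v, w. rewrite E1. auto.
Qed.

(** * Syllables and the split quasimorphism *)

Definition syllable_step (x : letter) (S : list (gen * Z)) : list (gen * Z) :=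
  match S with
  | (h, k) :: rest =>
      if gen_eqb (fst x) h then (h, (letter_exp x + k)%Z) :: rest
      else (fst x, letter_exp x) :: (h, k) :: rest
  | nil => (fst x, letter_exp x) :: nil
  end.

Lemma syllables_cons x w : syllables (x :: w) = syllable_step x (syllables w).
Proof. reflexivity. Qed.

Fixpoint syllable_merge (T S : list (gen * Z)) : list (gen * Z) :=
  match T with
  | nil => S
  | t :: nil =>
      match S with
      | s :: S' => if gen_eqb (fst t) (fst s) then (fst t, (snd t + snd s)%Z) :: S' else t :: S
      | nil => t :: nil
      end
  | t :: T' => t :: syllable_merge T' S
  end.

Lemma syllable_step_merge x T S :
  syllable_step x (syllable_merge T S) = syllable_merge (syllable_step x T) S.
Proof.
  destruct T as [|[h a] [|t' T]]; simpl.
  - destruct S as [|[h' k] S]; simpl; auto.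
    destruct (gen_eqb (fst x) h') eqn:E; auto.
    apply gen_eqb_eq in E; subst; auto.
  - destruct S as [|[h' k] S]; simpl.
    + destruct (gen_eqb (fst x) h); simpl; auto.
    + destruct (gen_eqb h h') eqn:E1, (gen_eqb (fst x) h) eqn:E2; simpl;
        rewrite ?E1, ?E2, ?Z.add_assoc; reflexivity.
  - destruct (gen_eqb (fst x) h); simpl; auto.
Qed.

Lemma syllables_app p q : syllables (p ++ q) = syllable_merge (syllables p) (syllables q).
Proof.
  induction p as [|x p IH]; simpl; auto.
  change (syllable_step x (syllables (p ++ q)) =
          syllable_merge (syllable_step x (syllables p)) (syllables q)).
  rewrite IH. apply syllable_step_merge.
Qed.

Lemma syllables_nil g : syllables g = nil -> g = nil.
Proof.
  destruct g as [|x g]; auto. rewrite syllables_cons.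
  destruct (syllables g) as [|[? ?] ?]; simpl; [|destruct (gen_eqb _ _)]; discriminate.
Qed.

Definition syllable_opp (s : gen * Z) : gen * Z := (fst s, (- snd s)%Z).

Lemma syllable_merge_snoc R t s : syllable_merge (R ++ t :: nil) (s :: nil) =
  if gen_eqb (fst t) (fst s) then R ++ (fst t, (snd t + snd s)%Z) :: nil
  else R ++ t :: s :: nil.
Proof.
  induction R as [|r R IH]; simpl.
  - destruct (gen_eqb _ _); auto.
  - destruct (R ++ t :: nil) eqn:E.
    + destruct R; discriminate.
    + rewrite IH. destruct (gen_eqb _ _); auto.
Qed.

Lemma syllables_winv v : syllables (winv v) = rev (map syllable_opp (syllables v)).
Proof.
  induction v as [|x v IH]; simpl; auto.
  rewrite winv_cons, syllables_app, IH. simpl.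
  destruct (syllables v) as [|[h k] S]; simpl.
  - destruct x as [a []]; reflexivity.
  - rewrite syllable_merge_snoc. simpl.
    destruct (gen_eqb (fst x) h) eqn:E.
    + apply gen_eqb_eq in E. rewrite <- E, gen_eqb_refl. simpl.
      unfold syllable_opp; simpl. do 3 f_equal.
      destruct x as [a []]; unfold letter_exp, letter_inv; cbn [fst snd negb]; lia.
    + replace (gen_eqb h (fst x)) with false by (destruct h, (fst x); auto).
      simpl. rewrite <- app_assoc. destruct x as [a []]; reflexivity.
Qed.

Lemma syllables_first_run g h j rest : reduced g -> syllables g = (h, j) :: rest ->
  exists (t : bool) (m : nat) (w : word),
    (1 <= m)%nat /\ j = (if t then - Z.of_nat m else Z.of_nat m)%Z /\
    g = repeat (h, t) m ++ w /\
    ((rest = nil /\ w = nil) \/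
     (exists h' j' rest' u w', rest = (h', j') :: rest' /\ w = u :: w' /\
                              fst u = h' /\ gen_eqb h' h = false)).
Proof.
  revert h j rest. induction g as [|x g IH]; intros h j rest Hg E; [discriminate|].
  rewrite syllables_cons in E. destruct (syllables g) as [|[h0 j0] rest0] eqn:Eg.
  - apply syllables_nil in Eg. subst g. injection E; intros; subst.
    exists (snd x), 1%nat, nil. destruct x as [a []]; repeat split; auto.
  - destruct (IH h0 j0 rest0 (reduced_tl _ _ Hg) eq_refl)
      as [t [m [w [Hm [Ej [Eg2 Hr]]]]]].
    simpl in E. destruct (gen_eqb (fst x) h0) eqn:Ex.
    + apply gen_eqb_eq in Ex. injection E as E1 E2 E3.
      assert (Hx : x = (h0, t)).
      { rewrite Eg2 in Hg. destruct m as [|m]; [lia|]. destruct Hg as [Hg _].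
        destruct x as [a s]; simpl in *; subst a. unfold letter_eqb, letter_inv in Hg.
        simpl in Hg. rewrite gen_eqb_refl in Hg. destruct s, t; simpl in *; congruence. }
      exists t, (S m), w. split; [lia|]. split; [|split].
      * rewrite <- E2, Ej, Hx. unfold letter_exp. simpl. destruct t; lia.
      * rewrite Eg2, Hx, <- E1. reflexivity.
      * rewrite <- E3, <- E1. exact Hr.
    + injection E; intros; subst h j rest.
      exists (snd x), 1%nat, g. split; [lia|].
      split; [destruct x as [a []]; reflexivity|].
      split; [destruct x; reflexivity|].
      right. exists h0, j0, rest0, (h0, t), (repeat (h0, t) (m - 1) ++ w).
      repeat split; auto.
      * subst g. destruct m; [lia|]. simpl. rewrite Nat.sub_0_r. auto.
      * destruct h0, (fst x); simpl in *; auto.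
Qed.

Lemma Rabs_triang3 a b c : Rabs (a + b + c) <= Rabs a + Rabs b + Rabs c.
Proof.
  eapply Rle_trans; [apply Rabs_triang|].
  apply Rplus_le_compat_r, Rabs_triang.
Qed.

Section SplitQm.
Variables fA fB : Z -> R.

Definition syllable_value (s : gen * Z) : R :=
  match fst s with Ga => fA (snd s) | Gb => fB (snd s) end.

Definition syllable_sum (l : list (gen * Z)) : R :=
  fold_right (fun s acc => syllable_value s + acc) 0 l.

Lemma split_qm_syllable_sum g : split_qm fA fB g = syllable_sum (syllables g).
Proof. reflexivity. Qed.

Lemma syllable_sum_app l1 l2 : syllable_sum (l1 ++ l2) = syllable_sum l1 + syllable_sum l2.
Proof. induction l1; simpl; [lra|]. rewrite IHl1. lra. Qed.

Lemma syllable_sum_rev l : syllable_sum (rev l) = syllable_sum l.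
Proof. induction l; simpl; auto. rewrite syllable_sum_app, IHl. simpl. lra. Qed.

Variable M : R.
Hypothesis value_bound : forall s, Rabs (syllable_value s) <= M.

Lemma syllable_sum_merge T S :
  Rabs (syllable_sum (syllable_merge T S) - syllable_sum T - syllable_sum S) <= 3 * M.
Proof.
  assert (M0 : 0 <= M) by (eapply Rle_trans; [apply Rabs_pos|apply (value_bound (Ga, 0%Z))]).
  induction T as [|t [|t' T] IH]; simpl.
  - replace (syllable_sum S - 0 - syllable_sum S) with 0 by ring. rewrite Rabs_R0. lra.
  - destruct S as [|s S]; simpl.
    + replace (syllable_value t + 0 - (syllable_value t + 0) - 0) with 0 by ring.
      rewrite Rabs_R0. lra.
    + destruct (gen_eqb (fst t) (fst s)) eqn:E; simpl.
      * apply gen_eqb_eq in E. destruct t as [h a], s as [h' b]; simpl in *; subst.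
        replace (syllable_value (h', (a + b)%Z) + syllable_sum S - (syllable_value (h', a) + 0)
                 - (syllable_value (h', b) + syllable_sum S))
          with (syllable_value (h', (a + b)%Z) + - syllable_value (h', a)
                + - syllable_value (h', b)) by ring.
        eapply Rle_trans; [apply Rabs_triang3|]. rewrite !Rabs_Ropp.
        pose proof (value_bound (h', (a + b)%Z)); pose proof (value_bound (h', a));
          pose proof (value_bound (h', b)). lra.
      * replace (syllable_value t + (syllable_value s + syllable_sum S) - (syllable_value t + 0)
                 - (syllable_value s + syllable_sum S)) with 0 by ring.
        rewrite Rabs_R0. lra.
  - simpl in IH. match goal with |- Rabs ?e <= _ => match type of IH with Rabs ?e' <= _ =>
      replace e with e' by ring end end. exact IH.
Qed.

Lemma split_qm_app p q :
  Rabs (split_qm fA fB (p ++ q) - split_qm fA fB p - split_qm fA fB q) <= 3 * M.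
Proof. rewrite !split_qm_syllable_sum, syllables_app. apply syllable_sum_merge. Qed.

Hypothesis altA : forall k, fA (- k)%Z = - fA k.
Hypothesis altB : forall k, fB (- k)%Z = - fB k.

Lemma syllable_sum_opp l : syllable_sum (map syllable_opp l) = - syllable_sum l.
Proof.
  induction l as [|[[] k] l IH]; simpl; [lra| |];
    rewrite IH; unfold syllable_value, syllable_opp; simpl; [rewrite altA|rewrite altB]; lra.
Qed.

Lemma split_qm_winv v : split_qm fA fB (winv v) = - split_qm fA fB v.
Proof.
  rewrite !split_qm_syllable_sum, syllables_winv, syllable_sum_rev, syllable_sum_opp.
  reflexivity.
Qed.

(* With [g = u v], [h = v^-1 w], [gh = u w], the defect is a combination of three
   concatenation defects, the [v]-terms cancelling because [f] is alternating. *)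
Lemma split_qm_defect g h : reduced g -> reduced h ->
  Rabs (split_qm fA fB (mul g h) - split_qm fA fB g - split_qm fA fB h) <= 9 * M.
Proof.
  intros Hg Hh. destruct (mul_cancel_decomp g h Hg Hh) as [u [v [w [-> [-> ->]]]]].
  pose proof (split_qm_app u w) as Huw. pose proof (split_qm_app u v) as Huv.
  pose proof (split_qm_app (winv v) w) as Hvw. rewrite split_qm_winv in Hvw.
  match goal with |- Rabs ?e <= _ =>
    replace e with ((split_qm fA fB (u ++ w) - split_qm fA fB u - split_qm fA fB w)
                    + - (split_qm fA fB (u ++ v) - split_qm fA fB u - split_qm fA fB v)
                    + - (split_qm fA fB (winv v ++ w) - - split_qm fA fB v - split_qm fA fB w))
      by ring end.
  eapply Rle_trans; [apply Rabs_triang3|]. rewrite !Rabs_Ropp. lra.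
Qed.

End SplitQm.

(** * Sandwich counts *)

Definition b2R (b : bool) : R := if b then 1 else 0.

Definition sandwich (x y : gen) (k : nat) (e1 e2 : bool) : word :=
  (y, e1) :: repeat (x, false) k ++ (y, e2) :: nil.

(* [Ca k] and [Cb k] are convertible to [Csandwich Ga Gb k] and [Csandwich Gb Ga k]. *)
Definition Csandwich (x y : gen) (k : nat) (g : word) : R :=
  Ccount (sandwich x y k false false) g + Ccount (sandwich x y k false true) g
  + Ccount (sandwich x y k true false) g + Ccount (sandwich x y k true true) g.

Lemma Ccount_nil p : Ccount p nil = 0.
Proof. unfold Ccount, hcount. destruct p, (winv _); simpl; ring. Qed.

Definition signed_indicator (k : nat) (j : Z) : R :=
  b2R (Z.eqb j (Z.of_nat k)) - b2R (Z.eqb j (- Z.of_nat k)).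

Lemma signed_indicator_run k (t : bool) m : (1 <= m)%nat ->
  signed_indicator k (if t then - Z.of_nat m else Z.of_nat m)%Z
  = (if t then -1 else 1) * b2R (Nat.eqb k m).
Proof.
  intro Hm. unfold signed_indicator, b2R.
  destruct t, (Nat.eqb_spec k m);
    repeat match goal with |- context [Z.eqb ?a ?b] => destruct (Z.eqb_spec a b) end;
    lia || ring.
Qed.

Lemma winv_sandwich x y k e1 e2 :
  winv (sandwich x y k e1 e2) = (y, negb e2) :: repeat (x, true) k ++ (y, negb e1) :: nil.
Proof.
  unfold winv, sandwich. simpl. rewrite map_app, rev_app_distr. simpl.
  rewrite map_repeat, rev_repeat. reflexivity.
Qed.

Lemma Ccount_sandwich_cons x y k e1 e2 z g :
  Ccount (sandwich x y k e1 e2) (z :: g) = Ccount (sandwich x y k e1 e2) g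
   + b2R (letter_eqb (y, e1) z && prefixb (repeat (x, false) k ++ (y, e2) :: nil) g)
   - b2R (letter_eqb (y, negb e2) z && prefixb (repeat (x, true) k ++ (y, negb e1) :: nil) g).
Proof.
  unfold Ccount. rewrite winv_sandwich. unfold sandwich, hcount. cbn [occ prefixb].
  rewrite !plus_INR. unfold b2R.
  destruct (_ && _), (_ && _); simpl; ring.
Qed.

Definition first_letter_is (d : letter) (w : word) : bool :=
  match w with u :: _ => letter_eqb d u | nil => false end.

Lemma prefixb_run x s k d h t m w : (1 <= k)%nat -> (1 <= m)%nat -> gen_eqb (fst d) x = false ->
  (match w with u :: _ => gen_eqb (fst u) h = false | nil => True end) ->
  prefixb (repeat (x, s) k ++ d :: nil) (repeat (h, t) m ++ w) =
  gen_eqb h x && Bool.eqb s t && Nat.eqb k m && first_letter_is d w.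
Proof.
  intros Hk Hm Hd Hw. revert m Hm. induction k as [|k IH]; [lia|]. intros m Hm.
  destruct m as [|m]; [lia|]. cbn [repeat app prefixb].
  destruct k as [|k], m as [|m].
  - destruct w as [|u w]; simpl; destruct x, h, s, t; simpl;
      try destruct (letter_eqb d u); reflexivity.
  - destruct d as [dg ds]. simpl in Hd. destruct x, h, s, t, dg, ds; simpl in *; auto; discriminate.
  - destruct w as [|u w]; simpl; [rewrite !andb_false_r; reflexivity|].
    destruct u as [ug us]. simpl in Hw.
    destruct x, h, s, t, ug, us; simpl in *; auto; discriminate.
  - rewrite (IH ltac:(lia) (S m) ltac:(lia)). destruct x, h, s, t; reflexivity.
Qed.

(* Change of [Csandwich x y k] when a letter [z] is prepended to [g]: a [y]-letter in front of a
   maximal run [x^(+/-k)] that is followed by a [y]-letter creates one new occurrence. *)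
Definition sandwich_increment (x y : gen) (k : nat) (z : letter) (g : word) : R :=
  match syllables g with
  | (h, j) :: _ :: _ =>
      if gen_eqb h x && gen_eqb (fst z) y then signed_indicator k j else 0
  | _ => 0
  end.

Lemma Csandwich_cons x y k z g : gen_eqb y x = false -> (1 <= k)%nat -> reduced (z :: g) ->
  Csandwich x y k (z :: g) = Csandwich x y k g + sandwich_increment x y k z g.
Proof.
  intros Hxy Hk Hg. unfold Csandwich, sandwich_increment. rewrite !Ccount_sandwich_cons.
  destruct (syllables g) as [|[h j] rest] eqn:Es.
  - apply syllables_nil in Es. subst g. destruct k; [lia|]. simpl. unfold b2R.
    rewrite !andb_false_r. ring.
  - destruct (syllables_first_run g h j rest (reduced_tl _ _ Hg) Es)
      as [t [m [w [Hm [-> [-> Hr]]]]]].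
    assert (Hw : match w with u :: _ => gen_eqb (fst u) h = false | nil => True end).
    { destruct Hr as [[_ ->]|[h' [j' [rest' [u [w' [_ [-> [<- ?]]]]]]]]]; auto. }
    rewrite !prefixb_run by (auto; simpl; auto). rewrite signed_indicator_run by exact Hm.
    destruct Hr as [[-> ->]|[h' [j' [rest' [[ug us] [w' [-> [-> [Eu Hh]]]]]]]]].
    + unfold first_letter_is. rewrite !andb_false_r. unfold b2R. ring.
    + simpl in Eu. subst ug. destruct (Nat.eqb k m), z as [zg zs];
        destruct x, y, h, h', t, zg, zs, us; simpl in *; try discriminate; unfold b2R; ring.
Qed.

(** * Partial sums and interior sums *)

Fixpoint sum1 (F : nat -> R) (N : nat) : R :=
  match N with O => 0 | S N' => sum1 F N' + F (S N') end.

Lemma sum1_ext F G N : (forall k, (1 <= k <= N)%nat -> F k = G k) -> sum1 F N = sum1 G N.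
Proof.
  induction N; simpl; auto. intro H.
  rewrite IHN by (intros; apply H; lia). rewrite H by lia. auto.
Qed.

Lemma sum1_plus F G N : sum1 (fun k => F k + G k) N = sum1 F N + sum1 G N.
Proof. induction N; simpl; [lra|]. rewrite IHN; lra. Qed.

Lemma sum1_zero F N : (forall k, (1 <= k <= N)%nat -> F k = 0) -> sum1 F N = 0.
Proof.
  intro H. rewrite (sum1_ext F (fun _ => 0)) by exact H. clear H.
  induction N; simpl; [reflexivity|]. rewrite IHN; ring.
Qed.

Lemma sum1_trunc F K N : (forall k, (K < k)%nat -> F k = 0) -> (K <= N)%nat ->
  sum1 F N = sum1 F K.
Proof.
  intros H HN. induction N; [replace K with 0%nat by lia; auto|].
  destruct (Nat.eq_dec K (S N)) as [->|Hne]; auto.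
  simpl. rewrite IHN, H by lia. ring.
Qed.

Lemma sum1_indicator f m N : (1 <= m <= N)%nat -> sum1 (fun k => f k * b2R (Nat.eqb k m)) N = f m.
Proof.
  induction N; intro H; [lia|]. cbn [sum1]. destruct (Nat.eqb_spec (S N) m).
  - subst m. rewrite sum1_zero; [unfold b2R; ring|].
    intros k Hk. destruct (Nat.eqb_spec k (S N)); [lia|]. unfold b2R; ring.
  - rewrite IHN by lia. unfold b2R; ring.
Qed.

Lemma sum_f_R0_sum1 F n : sum_f_R0 (fun k => F (S k)) n = sum1 F (S n).
Proof. induction n; simpl; [ring|]. rewrite IHn. reflexivity. Qed.

Lemma sum1_signed_indicator f (t : bool) m N : (forall k, f (- k)%Z = - f k) -> (1 <= m <= N)%nat ->
  sum1 (fun k => f (Z.of_nat k) * signed_indicator k (if t then - Z.of_nat m else Z.of_nat m)%Z) N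
  = f (if t then - Z.of_nat m else Z.of_nat m)%Z.
Proof.
  intros Halt Hm.
  rewrite (sum1_ext _
    (fun k => (if t then - f (Z.of_nat k) else f (Z.of_nat k)) * b2R (Nat.eqb k m)))
    by (intros k Hk; rewrite signed_indicator_run by lia; destruct t; ring).
  rewrite sum1_indicator by exact Hm. destruct t; [rewrite Halt|]; reflexivity.
Qed.

Section Interior.
Variables fA fB : Z -> R.
Hypothesis altA : forall k, fA (- k)%Z = - fA k.
Hypothesis altB : forall k, fB (- k)%Z = - fB k.

Definition interior_sum (g : word) : R :=
  match syllables g with
  | nil => 0
  | _ :: rest => syllable_sum fA fB (removelast rest)
  end.

Lemma series_term_nil k : series_term fA fB k nil = 0.
Proof. unfold series_term, Ca, Cb. rewrite !Ccount_nil. ring. Qed.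

Lemma series_term_cons k z g : (1 <= k)%nat -> reduced (z :: g) ->
  series_term fA fB k (z :: g) = series_term fA fB k g
   + (fA (Z.of_nat k) * sandwich_increment Ga Gb k z g
      + fB (Z.of_nat k) * sandwich_increment Gb Ga k z g).
Proof.
  intros Hk Hg. unfold series_term.
  change (Ca k) with (Csandwich Ga Gb k). change (Cb k) with (Csandwich Gb Ga k).
  rewrite !Csandwich_cons by (auto; reflexivity). ring.
Qed.

(* Prepending [z] to [g] adds to the interior exactly the old first syllable [(h, j)], when
   [z] starts a new syllable and [(h, j)] is not also the last one; the sandwich increments
   detect precisely this syllable. *)
Lemma sum1_sandwich_increments z g N : reduced (z :: g) -> (length g <= N)%nat ->
  sum1 (fun k => fA (Z.of_nat k) * sandwich_increment Ga Gb k z g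
                 + fB (Z.of_nat k) * sandwich_increment Gb Ga k z g) N
  = interior_sum (z :: g) - interior_sum g.
Proof.
  intros Hg HN. unfold sandwich_increment, interior_sum. rewrite syllables_cons.
  destruct (syllables g) as [|[h j] rest] eqn:Es.
  { rewrite sum1_zero by (intros; ring). simpl. ring. }
  destruct (syllables_first_run g h j rest (reduced_tl _ _ Hg) Es)
    as [t [m [w [Hm [Ej [Eg Hr]]]]]].
  assert (HmN : (m <= N)%nat) by (rewrite Eg, length_app, repeat_length in HN; lia).
  destruct Hr as [[-> ->]|[h' [j' [rest' [u [w' [-> [-> [Eu Hh]]]]]]]]].
  { rewrite sum1_zero by (intros; ring). simpl. destruct (gen_eqb (fst z) h); simpl; ring. }
  simpl. destruct (gen_eqb (fst z) h) eqn:Ezh.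
  - apply gen_eqb_eq in Ezh. rewrite Ezh, sum1_zero by (intros; destruct h; simpl; ring).
    simpl. ring.
  - subst j. simpl.
    match goal with |- _ = ?a + ?b - ?b => replace (a + b - b) with a by ring end.
    unfold syllable_value. simpl.
    destruct h, (fst z); try discriminate; simpl;
      [rewrite <- (sum1_signed_indicator fA t m N) by (auto; lia)
      |rewrite <- (sum1_signed_indicator fB t m N) by (auto; lia)];
      apply sum1_ext; intros; ring.
Qed.

Lemma sum1_series_term g N : reduced g -> (length g <= N)%nat ->
  sum1 (fun k => series_term fA fB k g) N = interior_sum g.
Proof.
  revert N. induction g as [|z g IH]; intros N Hg HN.
  - apply sum1_zero. intros; apply series_term_nil.
  - rewrite (sum1_ext _ (fun k => series_term fA fB k g
      + (fA (Z.of_nat k) * sandwich_increment Ga Gb k z g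
         + fB (Z.of_nat k) * sandwich_increment Gb Ga k z g)))
      by (intros; apply series_term_cons; auto; lia).
    simpl in HN. rewrite sum1_plus, IH, sum1_sandwich_increments by (eauto using reduced_tl; lia).
    ring.
Qed.

Lemma series_term_infinite_sum g : reduced g ->
  infinite_sum (fun n => series_term fA fB (S n) g) (interior_sum g).
Proof.
  intros Hg eps He. exists (length g). intros n Hn.
  rewrite (sum_f_R0_sum1 (fun k => series_term fA fB k g)), sum1_series_term by (auto; lia).
  unfold Rdist. rewrite Rminus_diag, Rabs_R0. exact He.
Qed.

End Interior.

Definition defect_le (F : word -> R) (D : R) : Prop :=
  forall g h, reduced g -> reduced h -> Rabs (F (mul g h) - F g - F h) <= D.

Lemma defect_le_ext F G D : (forall w, reduced w -> F w = G w) -> defect_le F D -> defect_le G D.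
Proof. intros E H g h Hg Hh. rewrite <- !E by (auto; apply mul_reduced). auto. Qed.

Section Bounded.
Variables fA fB : Z -> R.
Variable M : R.
Hypothesis value_bound : forall s, Rabs (syllable_value fA fB s) <= M.

Lemma split_qm_interior_sum_dist g : Rabs (split_qm fA fB g - interior_sum fA fB g) <= 2 * M.
Proof.
  pose proof (Rabs_pos (syllable_value fA fB (Ga, 0%Z))) as M0.
  pose proof (value_bound (Ga, 0%Z)).
  rewrite split_qm_syllable_sum. unfold interior_sum.
  destruct (syllables g) as [|s [|r rest]].
  - simpl. rewrite Rminus_0_r, Rabs_R0. lra.
  - simpl. replace (syllable_value fA fB s + 0 - 0) with (syllable_value fA fB s) by ring.
    pose proof (value_bound s). lra.
  - set (l := r :: rest). change (syllable_sum fA fB (s :: l)) with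
      (syllable_value fA fB s + syllable_sum fA fB l).
    rewrite (app_removelast_last s (l := l)) at 1 by discriminate.
    rewrite syllable_sum_app. cbn [syllable_sum fold_right].
    match goal with |- Rabs (?a + (?b + (?c + 0)) - ?b) <= _ =>
      replace (a + (b + (c + 0)) - b) with (a + c) by ring end.
    eapply Rle_trans; [apply Rabs_triang|].
    pose proof (value_bound s). pose proof (value_bound (last l s)). lra.
Qed.

Hypothesis altA : forall k, fA (- k)%Z = - fA k.
Hypothesis altB : forall k, fB (- k)%Z = - fB k.

Lemma interior_sum_defect : defect_le (interior_sum fA fB) (15 * M).
Proof.
  intros g h Hg Hh.
  pose proof (split_qm_defect fA fB M value_bound altA altB g h Hg Hh).
  pose proof (split_qm_interior_sum_dist (mul g h)).
  pose proof (split_qm_interior_sum_dist g). pose proof (split_qm_interior_sum_dist h).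
  set (i1 := interior_sum fA fB (mul g h)) in *. set (i2 := interior_sum fA fB g) in *.
  set (i3 := interior_sum fA fB h) in *.
  set (s1 := split_qm fA fB (mul g h)) in *. set (s2 := split_qm fA fB g) in *.
  set (s3 := split_qm fA fB h) in *.
  replace (i1 - i2 - i3) with ((s1 - s2 - s3) + - (s1 - i1) + ((s2 - i2) + (s3 - i3))) by ring.
  eapply Rle_trans; [apply Rabs_triang3|]. rewrite Rabs_Ropp.
  pose proof (Rabs_triang (s2 - i2) (s3 - i3)). lra.
Qed.

End Bounded.

Lemma syllable_value_bound fA fB MA MB :
  (forall k, Rabs (fA k) <= MA) -> (forall k, Rabs (fB k) <= MB) ->
  forall s, Rabs (syllable_value fA fB s) <= Rmax MA MB.
Proof.
  intros HA HB [[] j]; unfold syllable_value; simpl.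
  - eapply Rle_trans; [apply HA|apply Rmax_l].
  - eapply Rle_trans; [apply HB|apply Rmax_r].
Qed.

Lemma interior_sum_plus fA fB f1 g1 f2 g2 :
  (forall j, fA j = f1 j + f2 j) -> (forall j, fB j = g1 j + g2 j) ->
  forall w, interior_sum fA fB w = interior_sum f1 g1 w + interior_sum f2 g2 w.
Proof.
  intros HA HB w. unfold interior_sum. destruct (syllables w) as [|_ l]; [ring|].
  induction (removelast l) as [|[[] j] l' IH]; simpl; [ring| |];
    rewrite IH; unfold syllable_value; simpl; [rewrite HA|rewrite HB]; ring.
Qed.

Definition syllable_mass (l : list (gen * Z)) : R :=
  fold_right (fun s acc => IZR (Z.abs (snd s)) + acc) 0 l.

Lemma syllable_mass_removelast l : syllable_mass (removelast l) <= syllable_mass l.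
Proof.
  induction l as [|a [|b l] IH]; simpl in *; [lra| |lra].
  pose proof (IZR_le 0 _ (Z.abs_nonneg (snd a))). lra.
Qed.

Lemma syllable_mass_syllables w : syllable_mass (syllables w) <= INR (length w).
Proof.
  induction w as [|x w IH]; [simpl; lra|]. cbn [length]. rewrite S_INR, syllables_cons.
  unfold syllable_step. destruct (syllables w) as [|[h k] S]; simpl in *.
  - destruct x as [a []]; simpl; lra.
  - destruct (gen_eqb (fst x) h); simpl.
    + assert (Hx : (Z.abs (letter_exp x + k) <= 1 + Z.abs k)%Z)
        by (destruct x as [a []]; unfold letter_exp; cbn [snd]; lia).
      apply IZR_le in Hx. rewrite plus_IZR in Hx. lra.
    + destruct x as [a []]; simpl; lra.
Qed.

Lemma interior_sum_linear_bound fA fB c w :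
  (forall s, Rabs (syllable_value fA fB s) <= c * IZR (Z.abs (snd s))) -> 0 <= c ->
  Rabs (interior_sum fA fB w) <= c * INR (length w).
Proof.
  intros H c0. unfold interior_sum. pose proof (syllable_mass_syllables w) as Hw.
  destruct (syllables w) as [|s rest].
  { rewrite Rabs_R0. apply Rmult_le_pos; [lra|apply pos_INR]. }
  assert (Hsum : forall l, Rabs (syllable_sum fA fB l) <= c * syllable_mass l).
  { induction l as [|t l IH]; simpl; [rewrite Rabs_R0; lra|].
    eapply Rle_trans; [apply Rabs_triang|]. pose proof (H t). lra. }
  eapply Rle_trans; [apply Hsum|]. apply Rmult_le_compat_l; [exact c0|]. simpl in Hw.
  pose proof (syllable_mass_removelast rest). pose proof (IZR_le 0 _ (Z.abs_nonneg (snd s))). lra.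
Qed.

(** * Homogenisation *)

Lemma INR_S_pos n : 0 < INR (S n).
Proof. apply lt_0_INR; lia. Qed.

Lemma Rabs_div_le u c e : 0 < c -> Rabs u <= c * e -> Rabs (u / c) <= e.
Proof.
  intros Hc H. unfold Rdiv. rewrite Rabs_mult, Rabs_inv, (Rabs_pos_eq c) by lra.
  apply (Rmult_le_reg_l c); [lra|]. field_simplify; lra.
Qed.

Lemma div_INR_S_eventually_lt B eps : 0 < eps ->
  exists N, forall n, (N <= n)%nat -> B / INR (S n) < eps.
Proof.
  intro He. destruct (INR_unbounded (Rabs B / eps)) as [N HN]. exists N. intros n Hn.
  pose proof (INR_S_pos n). pose proof (Rle_abs B).
  assert (INR N <= INR n) by (apply le_INR; lia). rewrite S_INR in *.
  apply (Rmult_lt_reg_r (INR n + 1)); [lra|].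
  replace (B / (INR n + 1) * (INR n + 1)) with B by (field; lra).
  assert (Rabs B / eps * eps = Rabs B) by (field; lra).
  assert (Rabs B / eps * eps < (INR n + 1) * eps) by (apply Rmult_lt_compat_r; lra). lra.
Qed.

Lemma Un_cv_0_div_INR_S (v : nat -> R) B :
  (forall n, Rabs (v n) <= B / INR (S n)) -> Un_cv v 0.
Proof.
  intros H eps He. destruct (div_INR_S_eventually_lt B eps He) as [N HN].
  exists N. intros n Hn. unfold Rdist. rewrite Rminus_0_r.
  eapply Rle_lt_trans; [apply H|auto].
Qed.

Lemma Un_cv_Rabs_le (u : nat -> R) l c : Un_cv u l -> (forall n, Rabs (u n) <= c) -> Rabs l <= c.
Proof.
  intros Hu Hc. destruct (Rle_dec (Rabs l) c) as [|Hn]; auto. exfalso.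
  destruct (Hu (Rabs l - c)) as [N HN]; [lra|].
  specialize (HN N (le_n _)). specialize (Hc N). unfold Rdist in HN.
  pose proof (Rabs_triang_inv l (u N)). rewrite Rabs_minus_sym in HN. lra.
Qed.

Section Homogenisation.
Variables (F : word -> R) (g : word) (D : R).
Hypothesis HF : defect_le F D.

Lemma defect_pow_mul n k : (1 <= k)%nat ->
  Rabs (F (Defs.pow g (k * n)) - INR k * F (Defs.pow g n)) <= INR k * D.
Proof.
  intro Hk. induction k as [|[|k] IH]; [lia| |].
  - simpl. rewrite Nat.add_0_r. replace (F (Defs.pow g n) - 1 * F (Defs.pow g n)) with 0 by ring.
    rewrite Rabs_R0. assert (0 <= D) by (eapply Rle_trans; [apply Rabs_pos|apply (HF nil nil I I)]).
    lra.
  - specialize (IH ltac:(lia)).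
    replace (S (S k) * n)%nat with (S k * n + n)%nat by lia. rewrite word_pow_add, (S_INR (S k)).
    pose proof (HF _ _ (pow_reduced g (S k * n)) (pow_reduced g n)).
    match goal with |- Rabs ?e <= _ => replace e with
      ((F (mul (Defs.pow g (S k * n)) (Defs.pow g n)) - F (Defs.pow g (S k * n)) - F (Defs.pow g n))
       + (F (Defs.pow g (S k * n)) - INR (S k) * F (Defs.pow g n))) by ring end.
    eapply Rle_trans; [apply Rabs_triang|]. lra.
Qed.

Let a n := F (Defs.pow g (S n)) / INR (S n).

(* Compare both terms with [F(g^((p+1)(q+1))) / ((p+1)(q+1))]. *)
Lemma homog_seq_dist p q : Rabs (a p - a q) <= D / INR (S p) + D / INR (S q).
Proof.
  pose proof (INR_S_pos p). pose proof (INR_S_pos q).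
  set (c := F (Defs.pow g (S p * S q)) / (INR (S p) * INR (S q))).
  assert (Hp : Rabs (c - a p) <= D / INR (S p)).
  { pose proof (defect_pow_mul (S p) (S q) ltac:(lia)) as Hpow. rewrite Nat.mul_comm in Hpow.
    replace (c - a p) with ((F (Defs.pow g (S p * S q)) - INR (S q) * F (Defs.pow g (S p)))
                           / (INR (S p) * INR (S q))) by (unfold c, a; field; lra).
    apply Rabs_div_le; [nra|]. replace (INR (S p) * INR (S q) * (D / INR (S p)))
      with (INR (S q) * D) by (field; lra). exact Hpow. }
  assert (Hq : Rabs (c - a q) <= D / INR (S q)).
  { pose proof (defect_pow_mul (S q) (S p) ltac:(lia)) as Hpow.
    replace (c - a q) with ((F (Defs.pow g (S p * S q)) - INR (S p) * F (Defs.pow g (S q)))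
                           / (INR (S p) * INR (S q))) by (unfold c, a; field; lra).
    apply Rabs_div_le; [nra|]. replace (INR (S p) * INR (S q) * (D / INR (S q)))
      with (INR (S p) * D) by (field; lra). exact Hpow. }
  replace (a p - a q) with (- (c - a p) + (c - a q)) by ring.
  eapply Rle_trans; [apply Rabs_triang|]. rewrite Rabs_Ropp. lra.
Qed.

Lemma homog_cauchy : Cauchy_crit a.
Proof.
  intros eps He. destruct (div_INR_S_eventually_lt D (eps / 2)) as [N HN]; [lra|].
  exists N. intros n m Hn Hm. unfold Rdist. eapply Rle_lt_trans; [apply homog_seq_dist|].
  pose proof (HN n Hn); pose proof (HN m Hm). lra.
Qed.

End Homogenisation.

Lemma homog_exists F g : (exists D, defect_le F D) -> { l | homog F g l }.
Proof. intro H. apply R_complete. destruct H as [D HD]. exact (homog_cauchy F g D HD). Qed.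

Section HomogCalculus.
Variable g : word.

Lemma homog_ext F G l : (forall w, reduced w -> F w = G w) -> homog F g l -> homog G g l.
Proof.
  intros E H. eapply Un_cv_ext; [|exact H]. intro n. simpl. rewrite E by apply pow_reduced. auto.
Qed.

Lemma homog_plus F G l1 l2 : homog F g l1 -> homog G g l2 -> homog (fun w => F w + G w) g (l1 + l2).
Proof.
  intros H1 H2. eapply Un_cv_ext; [|exact (CV_plus _ _ _ _ H1 H2)].
  intro n. simpl. field. apply Rgt_not_eq, INR_S_pos.
Qed.

Lemma homog_minus F G l1 l2 :
  homog F g l1 -> homog G g l2 -> homog (fun w => F w - G w) g (l1 - l2).
Proof.
  intros H1 H2. eapply Un_cv_ext; [|exact (CV_minus _ _ _ _ H1 H2)].
  intro n. simpl. field. apply Rgt_not_eq, INR_S_pos.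
Qed.

Lemma homog_scal F l c : homog F g l -> homog (fun w => c * F w) g (c * l).
Proof.
  intros H. assert (Hc : Un_cv (fun _ => c) c).
  { intros eps He. exists 0%nat. intros. unfold Rdist. rewrite Rminus_diag, Rabs_R0. auto. }
  eapply Un_cv_ext; [|exact (CV_mult _ _ _ _ Hc H)].
  intro n. simpl. field. apply Rgt_not_eq, INR_S_pos.
Qed.

Lemma homog_zero : homog (fun _ => 0) g 0.
Proof.
  intros eps He. exists 0%nat. intros. unfold Rdist, Rdiv. rewrite Rmult_0_l, Rminus_diag, Rabs_R0.
  auto.
Qed.

Lemma homog_bounded_distance F G l B : homog F g l ->
  (forall w, reduced w -> Rabs (F w - G w) <= B) -> homog G g l.
Proof.
  intros H HB.
  assert (Hv : Un_cv (fun n => (G (Defs.pow g (S n)) - F (Defs.pow g (S n))) / INR (S n)) 0).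
  { apply (Un_cv_0_div_INR_S _ B). intros n. apply Rabs_div_le; [apply INR_S_pos|].
    rewrite Rabs_minus_sym. field_simplify; [|apply Rgt_not_eq, INR_S_pos].
    apply HB, pow_reduced. }
  pose proof (CV_plus _ _ _ _ H Hv) as Hs. rewrite Rplus_0_r in Hs.
  eapply Un_cv_ext; [|exact Hs]. intro n. simpl. field. apply Rgt_not_eq, INR_S_pos.
Qed.

End HomogCalculus.

(** * The counting quasimorphisms and the series *)

Lemma signed_indicator_alternating k j : signed_indicator k (- j)%Z = - signed_indicator k j.
Proof.
  unfold signed_indicator, b2R.
  repeat match goal with |- context [Z.eqb ?a ?b] => destruct (Z.eqb_spec a b) end;
    lia || ring.
Qed.

Lemma signed_indicator_bound k j : Rabs (signed_indicator k j) <= 1.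
Proof.
  unfold signed_indicator, b2R.
  repeat match goal with |- context [Z.eqb ?a ?b] => destruct (Z.eqb_spec a b) end;
    rewrite ?Rminus_diag, ?Rminus_0_r; unfold Rminus;
    rewrite ?Rplus_0_l, ?Rabs_Ropp, ?Rabs_R1, ?Rabs_R0; lra.
Qed.

Lemma signed_indicator_of_nat k k' : (1 <= k')%nat ->
  signed_indicator k (Z.of_nat k') = b2R (Nat.eqb k' k).
Proof.
  intro H. unfold signed_indicator, b2R.
  destruct (Nat.eqb_spec k' k);
    repeat match goal with |- context [Z.eqb ?a ?b] => destruct (Z.eqb_spec a b) end;
    lia || ring.
Qed.

Lemma zero_alternating (j : Z) : (fun _ : Z => 0) (- j)%Z = - (fun _ : Z => 0) j.
Proof. simpl. ring. Qed.

Lemma zero_bound (j : Z) : Rabs ((fun _ : Z => 0) j) <= 0.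
Proof. simpl. rewrite Rabs_R0. lra. Qed.

(* With [f_A] the signed indicator of [a^(+/-k)] and [f_B = 0] the series has a single
   non-zero term, [C_{a,k}]. *)
Lemma Ca_interior_sum k w : (1 <= k)%nat -> reduced w ->
  Ca k w = interior_sum (signed_indicator k) (fun _ => 0) w.
Proof.
  intros Hk Hw.
  rewrite <- (sum1_series_term _ _ (signed_indicator_alternating k) zero_alternating w
                (Nat.max k (length w))) by (auto; lia).
  rewrite (sum1_ext _ (fun k' => Ca k' w * b2R (Nat.eqb k' k)))
    by (intros k' Hk'; unfold series_term; rewrite signed_indicator_of_nat by lia; ring).
  rewrite sum1_indicator by lia. reflexivity.
Qed.

Lemma Cb_interior_sum k w : (1 <= k)%nat -> reduced w ->
  Cb k w = interior_sum (fun _ => 0) (signed_indicator k) w.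
Proof.
  intros Hk Hw.
  rewrite <- (sum1_series_term _ _ zero_alternating (signed_indicator_alternating k) w
                (Nat.max k (length w))) by (auto; lia).
  rewrite (sum1_ext _ (fun k' => Cb k' w * b2R (Nat.eqb k' k)))
    by (intros k' Hk'; unfold series_term; rewrite signed_indicator_of_nat by lia; ring).
  rewrite sum1_indicator by lia. reflexivity.
Qed.

Lemma Ccount_winv p w : Ccount (winv p) w = - Ccount p w.
Proof. unfold Ccount. rewrite winv_involutive. ring. Qed.

Lemma Ccount_self_inverse p w : winv p = p -> Ccount p w = 0.
Proof. intro E. unfold Ccount. rewrite E. ring. Qed.

(* For [k = 0] the four words are [bb], [bb^-1], [b^-1b], [b^-1b^-1] and everything cancels. *)
Lemma Ca_0 w : Ca 0 w = 0.
Proof.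
  unfold Ca. rewrite (Ccount_self_inverse (bw ++ gpow Ga 0 ++ binv)),
    (Ccount_self_inverse (binv ++ gpow Ga 0 ++ bw)) by reflexivity.
  change (binv ++ gpow Ga 0 ++ binv) with (winv (bw ++ gpow Ga 0 ++ bw)).
  rewrite Ccount_winv. ring.
Qed.

Lemma Cb_0 w : Cb 0 w = 0.
Proof.
  unfold Cb. rewrite (Ccount_self_inverse (aw ++ gpow Gb 0 ++ ainv)),
    (Ccount_self_inverse (ainv ++ gpow Gb 0 ++ aw)) by reflexivity.
  change (ainv ++ gpow Gb 0 ++ ainv) with (winv (aw ++ gpow Gb 0 ++ aw)).
  rewrite Ccount_winv. ring.
Qed.

Lemma defect_le_zero F : (forall w, F w = 0) -> defect_le F 0.
Proof. intros H g h _ _. rewrite !H. replace (0 - 0 - 0) with 0 by ring. rewrite Rabs_R0. lra. Qed.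

Lemma Ca_defect k : exists D, defect_le (Ca k) D.
Proof.
  destruct k as [|k]; [exists 0; apply defect_le_zero, Ca_0|].
  exists (15 * Rmax 1 0).
  apply (defect_le_ext (interior_sum (signed_indicator (S k)) (fun _ => 0))).
  - intros; symmetry; apply Ca_interior_sum; auto; lia.
  - apply interior_sum_defect; [|apply signed_indicator_alternating|apply zero_alternating].
    apply syllable_value_bound; [apply signed_indicator_bound|apply zero_bound].
Qed.

Lemma Cb_defect k : exists D, defect_le (Cb k) D.
Proof.
  destruct k as [|k]; [exists 0; apply defect_le_zero, Cb_0|].
  exists (15 * Rmax 0 1).
  apply (defect_le_ext (interior_sum (fun _ => 0) (signed_indicator (S k)))).
  - intros; symmetry; apply Cb_interior_sum; auto; lia.
  - apply interior_sum_defect; [|apply zero_alternating|apply signed_indicator_alternating].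
    apply syllable_value_bound; [apply zero_bound|apply signed_indicator_bound].
Qed.

Definition truncate (f : Z -> R) (K : nat) (j : Z) : R :=
  if Z.leb (Z.abs j) (Z.of_nat K) then f j else 0.
Definition tail (f : Z -> R) (K : nat) (j : Z) : R :=
  if Z.leb (Z.abs j) (Z.of_nat K) then 0 else f j.

Lemma truncate_alternating f K : (forall k, f (- k)%Z = - f k) ->
  forall j, truncate f K (- j)%Z = - truncate f K j.
Proof. intros H j. unfold truncate. rewrite Z.abs_opp. destruct (Z.leb _ _); [apply H|ring]. Qed.

Definition partial_sum (fA fB : Z -> R) (K : nat) (w : word) : R :=
  sum1 (fun k => series_term fA fB k w) K.

Lemma partial_sum_vanishing_tail fA fB K w :
  (forall k, fA (- k)%Z = - fA k) -> (forall k, fB (- k)%Z = - fB k) -> reduced w ->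
  (forall k, (K < k)%nat -> fA (Z.of_nat k) = 0 /\ fB (Z.of_nat k) = 0) ->
  partial_sum fA fB K w = interior_sum fA fB w.
Proof.
  intros altA altB Hw H. unfold partial_sum.
  rewrite <- (sum1_series_term fA fB altA altB w (Nat.max K (length w))) by (auto; lia).
  symmetry. apply sum1_trunc; [|lia]. intros k Hk.
  unfold series_term. destruct (H k Hk) as [-> ->]. ring.
Qed.

Section Series.
Variables fA fB : Z -> R.
Hypothesis altA : forall k, fA (- k)%Z = - fA k.
Hypothesis altB : forall k, fB (- k)%Z = - fB k.

Lemma interior_sum_truncate K w : reduced w ->
  interior_sum (truncate fA K) (truncate fB K) w = partial_sum fA fB K w.
Proof.
  intro Hw. rewrite <- (partial_sum_vanishing_tail _ _ K w (truncate_alternating fA K altA)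
                        (truncate_alternating fB K altB) Hw).
  - apply sum1_ext. intros k Hk. unfold series_term, truncate.
    replace (Z.leb (Z.abs (Z.of_nat k)) (Z.of_nat K)) with true
      by (symmetry; apply Z.leb_le; lia). reflexivity.
  - intros k Hk. unfold truncate.
    replace (Z.leb (Z.abs (Z.of_nat k)) (Z.of_nat K)) with false
      by (symmetry; apply Z.leb_gt; lia). auto.
Qed.

Lemma interior_sum_partial_tail K w : reduced w ->
  interior_sum fA fB w = partial_sum fA fB K w + interior_sum (tail fA K) (tail fB K) w.
Proof.
  intro Hw. rewrite <- interior_sum_truncate by exact Hw.
  apply interior_sum_plus; intro j; unfold truncate, tail; destruct (Z.leb _ _); ring.
Qed.

Variable M : R.
Hypothesis boundA : forall k, Rabs (fA k) <= M.
Hypothesis boundB : forall k, Rabs (fB k) <= M.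

Lemma bound_nonneg : 0 <= M.
Proof. eapply Rle_trans; [apply Rabs_pos|apply (boundA 0%Z)]. Qed.

Lemma syllable_value_le s : Rabs (syllable_value fA fB s) <= M.
Proof. destruct s as [[] j]; unfold syllable_value; simpl; auto. Qed.

(* Beyond [K] a syllable has exponent at least [K + 1], so [|f j| <= M <= M |j| / (K + 1)]. *)
Lemma tail_value_bound K s :
  Rabs (syllable_value (tail fA K) (tail fB K) s) <= M / INR (S K) * IZR (Z.abs (snd s)).
Proof.
  destruct s as [h j]. pose proof bound_nonneg. pose proof (INR_S_pos K).
  assert (Hge : 0 <= M / INR (S K)) by (apply Rle_mult_inv_pos; lra).
  pose proof (IZR_le 0 _ (Z.abs_nonneg j)).
  unfold syllable_value, tail; cbn [fst snd]. destruct (Z.leb (Z.abs j) (Z.of_nat K)) eqn:E.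
  - destruct h; rewrite Rabs_R0; apply Rmult_le_pos; auto.
  - apply Z.leb_gt in E.
    assert (INR (S K) <= IZR (Z.abs j)) by (rewrite INR_IZR_INZ; apply IZR_le; lia).
    assert (M <= M / INR (S K) * IZR (Z.abs j)).
    { replace M with (M / INR (S K) * INR (S K)) at 1 by (field; lra).
      apply Rmult_le_compat_l; auto. }
    destruct h; eapply Rle_trans; [apply boundA| |apply boundB|]; lra.
Qed.

Variables (g : word) (ca cb : nat -> R) (l : R).
Hypothesis homog_Ca : forall k, homog (Ca k) g (ca k).
Hypothesis homog_Cb : forall k, homog (Cb k) g (cb k).
Hypothesis homog_f : homog (split_qm fA fB) g l.

Definition hat_partial_sum (K : nat) : R :=
  sum1 (fun k => fA (Z.of_nat k) * ca k + fB (Z.of_nat k) * cb k) K.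

Lemma homog_partial_sum K : homog (partial_sum fA fB K) g (hat_partial_sum K).
Proof.
  induction K as [|K IH]; [apply homog_zero|].
  apply (homog_plus g (partial_sum fA fB K) (series_term fA fB (S K))); [exact IH|].
  apply (homog_plus g (fun w => fA (Z.of_nat (S K)) * Ca (S K) w)
                    (fun w => fB (Z.of_nat (S K)) * Cb (S K) w)); apply homog_scal; auto.
Qed.

(* The tail is an interior sum with [|f j| <= M |j| / (K + 1)], hence at most
   [M |g^n| / (K + 1) <= n M |g| / (K + 1)] on [g^n]. *)
Lemma hat_partial_sum_error K : Rabs (l - hat_partial_sum K) <= M / INR (S K) * INR (length g).
Proof.
  pose proof bound_nonneg. pose proof (INR_S_pos K).
  assert (Hge : 0 <= M / INR (S K)) by (apply Rle_mult_inv_pos; lra).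
  assert (Hi : homog (interior_sum fA fB) g l).
  { apply (homog_bounded_distance g _ _ _ (2 * M) homog_f). intros w _.
    apply (split_qm_interior_sum_dist fA fB M syllable_value_le). }
  assert (Ht : homog (interior_sum (tail fA K) (tail fB K)) g (l - hat_partial_sum K)).
  { eapply homog_ext; [|exact (homog_minus g _ _ _ _ Hi (homog_partial_sum K))].
    intros w Hw. simpl. rewrite (interior_sum_partial_tail K w Hw). ring. }
  apply (Un_cv_Rabs_le _ _ _ Ht). intro n. pose proof (INR_S_pos n).
  apply Rabs_div_le; [lra|].
  eapply Rle_trans; [apply interior_sum_linear_bound; [apply tail_value_bound|exact Hge]|].
  pose proof (pow_length g (S n)) as HL. apply le_INR in HL. rewrite mult_INR in HL.
  pose proof (pos_INR (length g)). nra.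
Qed.

Lemma hat_series :
  infinite_sum (fun n => fA (Z.of_nat (S n)) * ca (S n) + fB (Z.of_nat (S n)) * cb (S n)) l.
Proof.
  intros eps He. destruct (div_INR_S_eventually_lt (M * INR (length g)) eps He) as [N HN].
  exists N. intros n Hn.
  rewrite (sum_f_R0_sum1 (fun k => fA (Z.of_nat k) * ca k + fB (Z.of_nat k) * cb k)).
  fold (hat_partial_sum (S n)). unfold Rdist. rewrite Rabs_minus_sym.
  eapply Rle_lt_trans; [apply hat_partial_sum_error|].
  replace (M / INR (S (S n)) * INR (length g)) with (M * INR (length g) / INR (S (S n)))
    by (field; apply Rgt_not_eq, INR_S_pos).
  apply HN. lia.
Qed.

End Series.

Definition sandwich_terms (fA fB : Z -> R) (k : nat) : list (word * R) :=
  map (fun e : bool * bool => (sandwich Ga Gb k (fst e) (snd e), fA (Z.of_nat k)))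
      ((false, false) :: (false, true) :: (true, false) :: (true, true) :: nil)
  ++ map (fun e : bool * bool => (sandwich Gb Ga k (fst e) (snd e), fB (Z.of_nat k)))
      ((false, false) :: (false, true) :: (true, false) :: (true, true) :: nil).

Fixpoint sandwich_list (fA fB : Z -> R) (K : nat) : list (word * R) :=
  match K with O => nil | S K' => sandwich_list fA fB K' ++ sandwich_terms fA fB (S K') end.

Lemma lin_comb_app L1 L2 w : lin_comb (L1 ++ L2) w = lin_comb L1 w + lin_comb L2 w.
Proof. induction L1 as [|p L1 IH]; simpl; [ring|]. rewrite IH. ring. Qed.

Lemma lin_comb_sandwich_list fA fB K w :
  lin_comb (sandwich_list fA fB K) w = partial_sum fA fB K w.
Proof.
  induction K as [|K IH]; [reflexivity|]. simpl. rewrite lin_comb_app, IH.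
  unfold partial_sum. simpl. f_equal.
  unfold series_term, lin_comb, sandwich_terms. simpl.
  change (Ca (S K) w) with (Csandwich Ga Gb (S K) w).
  change (Cb (S K) w) with (Csandwich Gb Ga (S K) w). unfold Csandwich. ring.
Qed.

Lemma sandwich_reduced x y k e1 e2 : gen_eqb y x = false -> (1 <= k)%nat ->
  reduced (sandwich x y k e1 e2).
Proof.
  intros H Hk. destruct k as [|k]; [lia|clear Hk]. unfold sandwich. simpl.
  split; [destruct x, y, e1; simpl in *; auto; discriminate|].
  induction k as [|k IH]; simpl.
  - split; [destruct x, y, e2; simpl in *; auto; discriminate|exact I].
  - split; [destruct x; reflexivity|exact IH].
Qed.

Lemma sandwich_list_reduced fA fB K p : In p (sandwich_list fA fB K) -> reduced (fst p).
Proof.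
  induction K as [|K IH]; simpl; [tauto|]. intros Hp. apply in_app_or in Hp.
  destruct Hp as [Hp|Hp]; auto.
  unfold sandwich_terms in Hp. simpl in Hp.
  repeat (destruct Hp as [<-|Hp]; [apply sandwich_reduced; auto; lia|]). destruct Hp.
Qed.

Theorem theorem3p25 (fA fB : Z -> R)
  (hA : bounded_alternating fA) (hB : bounded_alternating fB) :
  exists Phi : word -> R,
    (forall g : word, reduced g ->
       infinite_sum (fun n => series_term fA fB (S n) g) (Phi g)) /\
    is_quasimorphism Phi /\
    bounded_distance (split_qm fA fB) Phi /\
    (forall g : word, reduced g ->
       exists (l : R) (ca cb : nat -> R),
         homog (split_qm fA fB) g l /\
         (forall k : nat, homog (Ca k) g (ca k) /\ homog (Cb k) g (cb k)) /\
         infinite_sum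
           (fun n => fA (Z.of_nat (S n)) * ca (S n) + fB (Z.of_nat (S n)) * cb (S n)) l) /\
    (finitely_supported fA -> finitely_supported fB ->
       exists L : list (word * R),
         (forall p, In p L -> reduced (fst p)) /\
         bounded_distance (split_qm fA fB) (lin_comb L)).
Proof.
  destruct hA as [[MA HMA] altA], hB as [[MB HMB] altB].
  set (M := Rmax MA MB).
  assert (HA : forall k, Rabs (fA k) <= M) by (intro; eapply Rle_trans; [apply HMA|apply Rmax_l]).
  assert (HB : forall k, Rabs (fB k) <= M) by (intro; eapply Rle_trans; [apply HMB|apply Rmax_r]).
  pose proof (syllable_value_le fA fB M HA HB) as Hval.
  exists (interior_sum fA fB). split; [|split; [|split; [|split]]].
  - exact (series_term_infinite_sum fA fB altA altB).
  - exists (15 * M). exact (interior_sum_defect fA fB M Hval altA altB).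
  - exists (2 * M). intros g _. exact (split_qm_interior_sum_dist fA fB M Hval g).
  - intros g Hg.
    destruct (homog_exists (split_qm fA fB) g) as [l Hl].
    { exists (9 * M). exact (split_qm_defect fA fB M Hval altA altB). }
    exists l, (fun k => proj1_sig (homog_exists _ g (Ca_defect k))),
      (fun k => proj1_sig (homog_exists _ g (Cb_defect k))).
    split; [exact Hl|split; [intro k; split; apply proj2_sig|]].
    exact (hat_series fA fB altA altB M HA HB g _ _ l (fun k => proj2_sig _)
             (fun k => proj2_sig _) Hl).
  - intros [NA HNA] [NB HNB]. set (K := Z.to_nat (Z.max NA NB)).
    exists (sandwich_list fA fB K). split; [apply sandwich_list_reduced|].
    exists (2 * M). intros w Hw.
    rewrite lin_comb_sandwich_list, (partial_sum_vanishing_tail fA fB K w altA altB Hw)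
      by (intros k Hk; split; [apply HNA|apply HNB]; unfold K in Hk; lia).
    exact (split_qm_interior_sum_dist fA fB M Hval w).
Qed.
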